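(* There is a function $f$ such that, for every graph $H$ and every positive integer $t$, one of the following holds: (i) $K_t$ is a projection of $H$; (ii) $K_{t,t,t}$ is a projection of $H$; (iii) an extended biclique can be obtained from $H$ by deleting at most $f(t)$ vertices.
   Context: A graph $H'$ is a projection of $H$ if $H'$ can be obtained from $H$ by a sequence of vertex deletions and identifications of two nonadjacent vertices. $K_{t,t,t}$ is the complete tripartite graph with three parts of size $t$. An extended biclique is a complete bipartite graph together with a set of isolated vertices. *)

From mathcomp Require Import all_boot.
Set Implicit Arguments. Unset Strict Implicit. Unset Printing Implicit Defensive.

(* A graph living inside a finite ambient type T: vertex set gV and
   adjacency relation gadj (only its restriction to gV matters). *)
Record graph (T : finType) := Graph { gV : {set T}; gadj : rel T }.

Definition simple_graph (T : finType) (e : rel T) := symmetric e /\ irreflexive e.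

(* Identification of u and v: v disappears, u becomes adjacent to the union
   of the neighbourhoods of u and v. *)
Definition merge_adj (T : finType) (a : rel T) (u v : T) : rel T :=
  fun x y =>
    if x == u then a u y || a v y
    else if y == u then a x u || a x v
    else a x y.

Inductive proj_step (T : finType) (G : graph T) : graph T -> Prop :=
| step_delete v : v \in gV G -> proj_step G (Graph (gV G :\ v) (gadj G))
| step_identify u v : u \in gV G -> v \in gV G -> u != v -> ~~ gadj G u v ->
    proj_step G (Graph (gV G :\ v) (merge_adj (gadj G) u v)).

Inductive reachable (T : finType) (G : graph T) : graph T -> Prop :=
| reach_refl : reachable G G
| reach_step G1 G2 : reachable G G1 -> proj_step G1 G2 -> reachable G G2.

Definition iso_to (T S : finType) (G : graph T) (r : rel S) :=
  exists phi : S -> T, [/\ injective phi, [set phi x | x in S] = gV G &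
    forall x y, gadj G (phi x) (phi y) = r x y].

Definition is_projection (T S : finType) (e : rel T) (r : rel S) :=
  exists G', reachable (Graph [set: T] e) G' /\ iso_to G' r.

Definition K_adj (t : nat) : rel 'I_t := fun i j => i != j.
Definition Kttt_adj (t : nat) : rel ('I_3 * 'I_t) := fun x y => x.1 != y.1.

(* Subgraph of (T,e) induced on W is an extended biclique: a complete
   bipartite graph with parts A, B (possibly empty) plus isolated vertices. *)
Definition extended_biclique (T : finType) (e : rel T) (W : {set T}) :=
  exists A B : {set T}, [/\ A \subset W, B \subset W, [disjoint A & B] &
    forall x y, x \in W -> y \in W ->
      e x y = ((x \in A) && (y \in B)) || ((x \in B) && (y \in A))].

From mathcomp Require Import all_boot.
From mathcomp Require Import zify.
From Stdlib Require Import Classical.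
Set Implicit Arguments. Unset Strict Implicit. Unset Printing Implicit Defensive.

(* Greedily pack vertex-disjoint triangles, and vertex-disjoint quadruples
   a, b, c, d with edges ab, cd and non-edges ac, bd, ad (an induced P4 or
   2K2). If both packings stay below a bound N(t), their at most 7 N(t)
   vertices meet every such configuration, and a graph with none of them is an
   extended biclique.
   Otherwise an ordered Ramsey argument, colouring a pair of tuples by the
   adjacency pattern between their slots, gives 3t^2 tuples with a common
   pattern m. A slot adjacent to itself across tuples spans a K_t. For two
   slots p, q, unless m p q, m q p and the adjacency of p and q inside a tuple
   all agree, a half graph, a crown or an induced matching of size t^2 among
   them projects onto K_t. Otherwise m is determined by the tuples themselves,
   and one slot (for P4/2K2: one non-adjacent pair of slots) of t tuples per
   part gives K_{t,t,t}.
   Every projection is obtained from disjoint independent branch sets, by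
   deleting the rest and identifying each vertex with the root of its set. *)

Lemma reachable_trans (T : finType) (G1 G2 G3 : graph T) :
  reachable G1 G2 -> reachable G2 G3 -> reachable G1 G3.
Proof. by move=> h12; elim=> // G G' _ IH; apply: reach_step IH. Qed.

Lemma reachable_delete_set (T : finType) (a : rel T) (V D : {set T}) :
  D \subset V -> reachable (Graph V a) (Graph (V :\: D) a).
Proof.
have [n] := ubnP #|D|; elim: n D => // n IH D cD sDV.
have [->|[d dD]] := set_0Vmem D; first by rewrite setD0; apply: reach_refl.
have -> : V :\: D = (V :\: (D :\ d)) :\ d.
  by apply/setP=> x; rewrite !inE; case: eqP => // ->; rewrite dD.
apply: reach_step (IH _ _ _) (step_delete _).
- by rewrite (cardsD1 d) dD in cD.
- exact: subset_trans (subsetDl _ _) sDV.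
- by rewrite !inE eqxx (subsetP sDV).
Qed.

Section BranchSets.
Variables (T : finType) (e : rel T).
Hypothesis e_sym : symmetric e.
Hypothesis e_irr : irreflexive e.

Definition touch (X Y : {set T}) := [exists x in X, exists y in Y, e x y].

Lemma touchP (X Y : {set T}) :
  reflect (exists x y, [/\ x \in X, y \in Y & e x y]) (touch X Y).
Proof.
apply: (iffP existsP) => [[x /andP[xX /existsP[y /andP[yY exy]]]]|[x [y [xX yY exy]]]].
  by exists x, y.
by exists x; rewrite xX; apply/existsP; exists y; rewrite yY.
Qed.

Lemma touchC (X Y : {set T}) : touch X Y = touch Y X.
Proof. by apply/touchP/touchP => -[x [y [? ? ?]]]; exists y, x; rewrite e_sym. Qed.

Lemma touchUl (X Y Z : {set T}) : touch (X :|: Y) Z = touch X Z || touch Y Z.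
Proof.
apply/touchP/orP => [[x [y []]]|[]/touchP[x [y [xX yZ exy]]]].
- by rewrite inE => /orP[] ? ? ?; [left|right]; apply/touchP; exists x, y.
- by exists x, y; rewrite inE xX.
- by exists x, y; rewrite inE xX orbT.
Qed.

Lemma touchUr (X Y Z : {set T}) : touch Z (X :|: Y) = touch Z X || touch Z Y.
Proof. by rewrite touchC touchUl !(touchC Z). Qed.

Lemma touch1 x y : touch [set x] [set y] = e x y.
Proof.
apply/touchP/idP => [[x' [y' []]]|exy]; first by rewrite !inE => /eqP-> /eqP->.
by exists x, y; rewrite !inE.
Qed.

Lemma touch2 (a b c d : T) :
  touch [set a; b] [set c; d] = [|| e a c, e a d, e b c | e b d].
Proof. by rewrite touchUl !touchUr !touch1 !orbA. Qed.

Definition branch_adj (V : {set T}) (a : rel T) (B : T -> {set T}) :=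
  forall x y, x \in V -> y \in V -> a x y = (x != y) && touch (B x) (B y).

Lemma eq_branch_adj (V : {set T}) a (B B' : T -> {set T}) :
  {in V, B =1 B'} -> branch_adj V a B -> branch_adj V a B'.
Proof. by move=> eqB adjB x y xV yV; rewrite adjB // !eqB. Qed.

Lemma branch_adj_merge (V : {set T}) a B u v :
  branch_adj V a B -> u \in V -> v \in V -> u != v -> ~~ a u v ->
  branch_adj (V :\ v) (merge_adj a u v)
    (fun x => if x == u then B u :|: B v else B x).
Proof.
move=> adjB uV vV uv nuv x y; rewrite !inE => /andP[xv xV] /andP[yv yV].
have avu : a v u = false.
  by move: nuv; rewrite !adjB // (eq_sym v) uv touchC => /negbTE.
rewrite /merge_adj; case: (x =P u) => [->|xu]; case: (y =P u) => [->|yu].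
- by rewrite eqxx avu adjB ?eqxx.
- rewrite touchUl !adjB // (eq_sym v) yv (eq_sym u).
  by move/eqP/negbTE: yu => ->.
- by rewrite touchUr !adjB // xv; move/eqP/negbTE: xu => ->.
- exact: adjB.
Qed.

Section Contraction.
Variables (S : finType) (c : S -> {set T}) (root : S -> T).
Hypothesis root_in : forall s, root s \in c s.
Hypothesis c_disjoint : forall s s' x, x \in c s -> x \in c s' -> s = s'.
Hypothesis c_indep : forall s x y, x \in c s -> y \in c s -> ~~ e x y.

Definition covered := \bigcup_s c s.
Definition root_set := [set root s | s in S].
Definition rep y := if [pick s | y \in c s] is Some s then root s else y.

Lemma root_inj : injective root.
Proof. by move=> s s' eq_r; apply: (c_disjoint (root_in s)); rewrite eq_r. Qed.

Lemma rep_class s y : y \in c s -> rep y = root s.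
Proof.
rewrite /rep; case: pickP => [s' ys' ys|/(_ s)/= -> //].
by rewrite (c_disjoint ys' ys).
Qed.

Lemma root_set_covered : root_set \subset covered.
Proof. by apply/subsetP=> _ /imsetP[s _ ->]; apply/bigcupP; exists s. Qed.

Lemma rep_covered y : y \in covered -> rep y \in root_set.
Proof. by case/bigcupP=> s _ ys; rewrite (rep_class ys) imset_f. Qed.

Lemma rep_root y : y \in root_set -> rep y = y.
Proof. by case/imsetP=> s _ ->; apply: rep_class. Qed.

(* The branch sets in the middle of the contraction: a vertex of D is still
   alone, a root carries the part of its class already merged into it. *)
Definition pending (D : {set T}) x :=
  if x \in D then [set x] else [set y in covered | (rep y == x) && (y \notin D)].

Lemma pending_init :
  branch_adj (root_set :|: (covered :\: root_set)) e (pending (covered :\: root_set)).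
Proof.
have pendingE z : z \in root_set :|: (covered :\: root_set) ->
    pending (covered :\: root_set) z = [set z].
  rewrite /pending !inE; case: (boolP (z \in root_set)) => [zR _|_ /= ->] //.
  apply/setP=> w; rewrite !inE; case: (w =P z) => [->|/eqP wz].
    by rewrite zR (subsetP root_set_covered) // rep_root ?eqxx.
  case: (boolP (w \in root_set)) => [wR|_] /=.
    by rewrite rep_root // (negbTE wz) andbF.
  by case: (w \in covered); rewrite ?andbF.
move=> x y xV yV; rewrite !pendingE // touch1.
by case: (x =P y) => [->|]; rewrite ?e_irr.
Qed.

Lemma pending_done s : pending set0 (root s) = c s.
Proof.
rewrite /pending inE; apply/setP=> y; rewrite !inE andbT.
apply/andP/idP => [[/bigcupP[s' _ ys'] /eqP]|ys].
  by rewrite (rep_class ys') => /root_inj <-.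
by split; [apply/bigcupP; exists s | rewrite (rep_class ys)].
Qed.

Section Step.
Variables (D : {set T}) (d : T).
Hypothesis sD : D \subset covered :\: root_set.
Hypothesis dD : d \in D.

Let d_cov : d \in covered.
Proof. by have /setDP[] := subsetP sD d dD. Qed.
Let root_nD x : x \in root_set -> x \notin D.
Proof. by move=> xR; apply/negP => /(subsetP sD); rewrite inE xR. Qed.

Lemma pending_rep_indep : ~~ touch (pending D (rep d)) (pending D d).
Proof.
rewrite /pending (negbTE (root_nD (rep_covered d_cov))) dD.
apply/touchP => -[y [z [/setIdP[/bigcupP[s _ ys] /andP[/eqP ryd _]] /set1P -> eyd]]].
have /bigcupP[s' _ ds'] := d_cov.
move: ryd; rewrite (rep_class ys) (rep_class ds') => /root_inj eq_s.
by rewrite eq_s in ys; move: (c_indep ys ds'); rewrite eyd.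
Qed.

Lemma pending_merge x : x \in root_set :|: (D :\ d) ->
  (if x == rep d then pending D (rep d) :|: pending D d else pending D x)
  = pending (D :\ d) x.
Proof.
have rdR := rep_covered d_cov.
rewrite !inE => /orP[xR|/andP[xd xD]]; last first.
  have xr : x != rep d by apply: contraNneq (root_nD rdR) => <-.
  by rewrite (negbTE xr) /pending !inE xd xD.
case: (x =P rep d) => [->|/eqP xr].
  rewrite /pending (negbTE (root_nD rdR)) !inE (negbTE (root_nD rdR)) andbF dD.
  apply/setP=> y; rewrite !inE; case: (y =P d) => [->|yd] /=.
    by rewrite d_cov eqxx orbT.
  by rewrite orbF.
rewrite /pending !inE (negbTE (root_nD xR)) andbF; apply/setP=> y; rewrite !inE.
by case: (y =P d) => [->|] //=; rewrite dD eq_sym (negbTE xr) andbF.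
Qed.

End Step.

Lemma contract_pending (D : {set T}) a :
  D \subset covered :\: root_set -> branch_adj (root_set :|: D) a (pending D) ->
  exists a', reachable (Graph (root_set :|: D) a) (Graph root_set a')
             /\ branch_adj root_set a' (pending set0).
Proof.
have [n] := ubnP #|D|; elim: n D a => // n IH D a cD sD adjD.
have [D0|[d dD]] := set_0Vmem D.
  by exists a; move: adjD; rewrite D0 setU0; split=> //; apply: reach_refl.
have [dU dR] : d \in covered /\ d \notin root_set.
  by have /setDP[] := subsetP sD d dD.
have rdR := rep_covered dU.
have rdV : rep d \in root_set :|: D by rewrite inE rdR.
have dV : d \in root_set :|: D by rewrite inE dD orbT.
have rd_d : rep d != d by apply: contraNneq dR => <-.
have nadj : ~~ a (rep d) d by rewrite adjD // rd_d (pending_rep_indep sD dD).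
have eV : (root_set :|: D) :\ d = root_set :|: (D :\ d).
  by apply/setP=> x; rewrite !inE; case: (x =P d) => [->|]; rewrite ?(negbTE dR).
have adj' := branch_adj_merge adjD rdV dV rd_d nadj; rewrite eV in adj'.
have [|||a' [reach' adj'']] := IH (D :\ d) (merge_adj a (rep d) d).
- by rewrite (cardsD1 d) dD in cD.
- exact: subset_trans (subsetDl _ _) sD.
- exact: eq_branch_adj (pending_merge sD dD) adj'.
exists a'; split=> //; apply: reachable_trans reach'; rewrite -eV.
exact: reach_step (reach_refl _) (@step_identify _ (Graph _ a) _ _ rdV dV rd_d nadj).
Qed.

End Contraction.

Lemma is_projection_branch_sets (S : finType) (r : rel S) (c : S -> {set T}) :
  (forall s, exists x, x \in c s) ->
  (forall s s' x, x \in c s -> x \in c s' -> s = s') ->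
  (forall s x y, x \in c s -> y \in c s -> ~~ e x y) ->
  (forall s s', r s s' = (s != s') && touch (c s) (c s')) ->
  is_projection e r.
Proof.
move=> c_ne c_disj c_ind rE; have [root root_in] := fin_all_exists c_ne.
have [a' [reach adj]] := contract_pending root_in c_disj c_ind (subxx _)
  (pending_init root_in c_disj).
exists (Graph (root_set root) a'); split.
  apply: reachable_trans reach.
  have -> : root_set root :|: (covered c :\: root_set root) = [set: T] :\: ~: covered c.
    rewrite setTD setCK; apply/setP=> x; rewrite !inE.
    by case: (boolP (x \in root_set root)) => //= /(subsetP (root_set_covered root_in)).
  exact: reachable_delete_set (subsetT _).
have root_inj := root_inj root_in c_disj.
exists root; split=> // s s' /=.
by rewrite adj ?imset_f // !pending_done // (inj_eq root_inj) rE.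
Qed.

End BranchSets.

Section OrderedRamsey.
Variables (C : finType) (c0 : C).

Lemma sum_count_fibers (X : Type) (l : seq X) (f : X -> C) :
  \sum_(z : C) count (fun y => f y == z) l = size l.
Proof.
elim: l => [|y l IH] /=; first by rewrite big1.
rewrite big_split /= IH (bigD1 (f y)) //= eqxx big1 ?add1n ?addn0 //.
by move=> z; rewrite eq_sym => /negbTE ->.
Qed.

Lemma pigeonhole_count (X : Type) (l : seq X) (f : X -> C) n :
  #|C| * n <= size l -> exists z, n <= count (fun y => f y == z) l.
Proof.
case: n => [|n] hl; first by exists c0.
case: (pickP (fun z => n < count (fun y => f y == z) l)) => [z hz|small].
  by exists z.
suff : size l <= #|C| * n.
  have : 0 < #|C| by apply/card_gt0P; exists c0.
  by move: hl; rewrite mulnS; lia.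
rewrite -(sum_count_fibers l f) -sum_nat_const; apply: leq_sum => z _.
by rewrite leqNgt small.
Qed.

Fixpoint ramsey_tower m := if m is m'.+1 then (#|C| * ramsey_tower m').+1 else 0.

Lemma ramsey_left_homogeneous (col : nat -> nat -> C) m (L : seq nat) :
  sorted ltn L -> ramsey_tower m <= size L ->
  exists (sg : nat -> nat) (k : nat -> C),
   [/\ forall i, i < m -> sg i \in L,
       forall i j, i < j -> j < m -> sg i < sg j &
       forall i j, i < j -> j < m -> col (sg i) (sg j) = k i].
Proof.
elim: m L => [|m IH] L sL hL; first by exists (fun _ => 0), (fun _ => c0).
case: L sL hL => [|x L'] //= sL hL.
have [z hz] := pigeonhole_count (col x) hL; rewrite -size_filter in hz.
have sL' := sorted_filter ltn_trans (fun y => col x y == z) (path_sorted sL).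
have [sg [k [sgL sg_inc sg_col]]] := IH _ sL' hz.
have sgL' i : i < m -> sg i \in L' /\ col x (sg i) = z.
  by move/sgL; rewrite mem_filter => /andP[/eqP].
have x_min := order_path_min ltn_trans sL.
exists (fun i => if i is i'.+1 then sg i' else x),
       (fun i => if i is i'.+1 then k i' else z); split.
- by case=> [|i] hi; rewrite inE ?eqxx // (sgL' i hi).1 orbT.
- by case=> [|i] [|j] // hij hj; [exact: (allP x_min) (sgL' j hj).1 | exact: sg_inc].
- by case=> [|i] [|j] // hij hj; [exact: (sgL' j hj).2 | exact: sg_col].
Qed.

Definition ramsey_bound n := ramsey_tower (#|C| * n).

Lemma ordered_ramsey (col : nat -> nat -> C) n : exists sg : nat -> nat,
  [/\ forall a, a < n -> sg a < ramsey_bound n,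
      forall a b, a < b -> b < n -> sg a < sg b &
      exists M, forall a b, a < b -> b < n -> col (sg a) (sg b) = M].
Proof.
set m := #|C| * n.
have [sg [k [sg_iota sg_inc sg_col]]] :=
  ramsey_left_homogeneous col (iota_ltn_sorted 0 (ramsey_tower m))
    (eq_leq (esym (size_iota _ _))).
have [z hz] := pigeonhole_count k (eq_leq (esym (size_iota 0 m))).
set I := [seq i <- iota 0 m | k i == z] in hz; rewrite -size_filter -/I in hz.
have sI : sorted ltn I by apply: sorted_filter; [exact: ltn_trans | exact: iota_ltn_sorted].
have I_mem a : a < n -> nth 0 I a < m /\ k (nth 0 I a) = z.
  move=> ha; have : nth 0 I a \in I by apply: mem_nth; apply: leq_trans hz.
  by rewrite mem_filter mem_iota => /andP[/eqP -> /andP[_]].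
have I_inc a b : a < b -> b < n -> nth 0 I a < nth 0 I b.
  move=> ab bn; apply: (sorted_ltn_nth ltn_trans 0 sI) => //; rewrite inE.
    exact: leq_trans (ltn_trans ab bn) hz.
  exact: leq_trans bn hz.
exists (fun a => sg (nth 0 I a)); split.
- by move=> a /I_mem[/sg_iota]; rewrite mem_iota.
- by move=> a b ab bn; apply: sg_inc (I_inc _ _ ab bn) (I_mem b bn).1.
- exists z => a b ab bn; rewrite sg_col ?(I_inc _ _ ab bn) ?(I_mem b bn).1 //.
  exact: (I_mem a (ltn_trans ab bn)).2.
Qed.

End OrderedRamsey.

Section Packing.
Variables (T : finType) (k : nat) (P : (nat -> T) -> Prop).

Definition packing (fam : nat -> nat -> T) N :=
  (forall i, i < N -> P (fam i)) /\
  (forall i j p q, i < N -> j < N -> p < k -> q < k -> i != j -> fam i p != fam j q).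

Definition hits (S : {set T}) := forall x, P x -> exists2 p, p < k & x p \in S.

Lemma packing_or_hitting_set N :
  (exists fam, packing fam N) \/ (exists2 S : {set T}, #|S| <= k * N & hits S).
Proof.
elim: N => [|N [[fam [famP famD]]|[S cS hitS]]].
- case: (pickP (fun _ : T => true)) => [z _|T0].
    by left; exists (fun _ _ => z); split.
  by right; exists set0 => [|x]; [rewrite cards0 | have := T0 (x 0)].
- pose S := [set fam (nat_of_ord ip.1) (nat_of_ord ip.2) | ip : 'I_N * 'I_k].
  have cS : #|S| <= k * N.+1.
    by apply: leq_trans (leq_imset_card _ _) _; rewrite card_prod !card_ord; lia.
  have famS i p : i < N -> p < k -> fam i p \in S.
    by move=> hi hp; apply/imsetP; exists (Ordinal hi, Ordinal hp).
  case: (classic (exists2 x, P x & forall p, p < k -> x p \notin S)) => [[x Px xS]|];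
    last first.
    move=> nx; right; exists S => // x Px.
    case: (boolP (has (fun p => x p \in S) (iota 0 k))) => [/hasP[p]|nh].
      by rewrite mem_iota => /andP[_ hp] xpS; exists p.
    case: nx; exists x => // p hp; apply: contra nh => xpS.
    by apply/hasP; exists p; rewrite ?mem_iota.
  left; exists (fun i => if i == N then x else fam i); split.
    by move=> i hi; case: (i =P N) => // /eqP iN; apply: famP; lia.
  move=> i j p q hi hj hp hq ij.
  case: (i =P N) => [iN|/eqP iN]; case: (j =P N) => [jN|/eqP jN].
  + by rewrite iN jN eqxx in ij.
  + by apply: contraNneq (xS p hp) => ->; apply: famS => //; lia.
  + by apply: contraNneq (xS q hq) => <-; apply: famS => //; lia.
  + by apply: famD => //; lia.
- by right; exists S => //; apply: leq_trans cS _; lia.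
Qed.

End Packing.

Definition adj_pattern k := {ffun 'I_k * 'I_k -> bool}.

(* Colour a pair of tuples by its adjacency pattern; a monochromatic
   subsequence has the pattern of its first two members throughout. *)
Lemma homogeneous_subfamily (T : finType) (e : rel T) k (P : (nat -> T) -> Prop) n fam :
  packing k P fam (ramsey_bound (adj_pattern k) n) ->
  (forall x, P x -> forall p q, p < k -> q < k -> p != q -> x p != x q) ->
  exists v : nat -> nat -> T, [/\ forall a, a < n -> P (v a),
    forall a b p q, a < n -> b < n -> p < k -> q < k -> v a p = v b q -> a = b /\ p = q &
    forall a b p q, a < b -> b < n -> p < k -> q < k ->
      e (v a p) (v b q) = e (v 0 p) (v 1 q)].
Proof.
move=> [famP famD] fam_uniq.
pose col i j : adj_pattern k := [ffun pq : 'I_k * 'I_k => e (fam i pq.1) (fam j pq.2)].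
have [sg [sg_lt sg_inc [M sgM]]] := ordered_ramsey [ffun=> false] col n.
have sg_neq a b : a < b -> b < n -> sg a != sg b.
  by move=> ab bn; rewrite neq_ltn sg_inc.
exists (fam \o sg); split=> [a an|a b p q an bn pk qk /=|a b p q ab bn pk qk /=].
- exact/famP/sg_lt.
- case: (ltngtP a b) => [ab|ba|<-] eq_v.
  + move: (famD _ _ _ _ (sg_lt a an) (sg_lt b bn) pk qk (sg_neq a b ab bn)).
    by rewrite eq_v eqxx.
  + move: (famD _ _ _ _ (sg_lt b bn) (sg_lt a an) qk pk (sg_neq b a ba an)).
    by rewrite eq_v eqxx.
  + split=> //; case: (p =P q) => // /eqP pq.
    by move: (fam_uniq _ (famP _ (sg_lt a an)) p q pk qk pq); rewrite eq_v eqxx.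
- have n1 : 1 < n by apply: leq_ltn_trans bn; apply: leq_ltn_trans ab.
  have := sgM a b ab bn; rewrite -(sgM 0 1 isT n1).
  by move/ffunP/(_ (Ordinal pk, Ordinal qk)); rewrite !ffunE.
Qed.

Section Biclique.
Variables (T : finType) (e : rel T).
Hypothesis e_sym : symmetric e.

Definition triangle a b c := [&& e a b, e b c & e a c].

(* An induced path a-b-c-d or an induced matching {ab, cd}, according as b
   and c are adjacent or not. *)
Definition p4_or_2k2 a b c d := [&& e a b, e c d, ~~ e a c, ~~ e b d & ~~ e a d].

(* The parts are the neighbourhoods of the two ends of any edge. *)
Lemma extended_biclique_of_free (W : {set T}) :
  (forall a b c, a \in W -> b \in W -> c \in W -> ~~ triangle a b c) ->
  (forall a b c d, a \in W -> b \in W -> c \in W -> d \in W -> ~~ p4_or_2k2 a b c d) ->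
  extended_biclique e W.
Proof.
move=> no_tri no_p4.
case: (pickP (fun p : T * T => [&& p.1 \in W, p.2 \in W & e p.1 p.2]))
  => [[u v] /= /and3P[uW vW euv] | no_edge]; last first.
  exists set0, set0; split; rewrite ?sub0set ?disjoints_subset ?sub0set //.
  by move=> x y xW yW; rewrite !inE; move: (no_edge (x, y)); rewrite /= xW yW.
exists [set x in W | e v x], [set x in W | e u x].
split; try by apply/subsetP => x; rewrite inE => /andP[].
  rewrite disjoints_subset; apply/subsetP => x; rewrite !inE => /andP[xW evx].
  by apply: contra (no_tri u v x uW vW xW) => /andP[_ eux]; rewrite /triangle euv evx eux.
move=> x y xW yW; rewrite !inE xW yW /=.
move: (no_tri u v x uW vW xW) (no_tri u v y uW vW yW) (no_tri u y v uW yW vW)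
  (no_tri v u x vW uW xW) (no_tri v x y vW xW yW) (no_tri u x y uW xW yW)
  (no_p4 y u v x yW uW vW xW) (no_p4 u v x y uW vW xW yW)
  (no_p4 x y v u xW yW vW uW) (no_p4 x y u v xW yW uW vW)
  (no_p4 y x v u yW xW vW uW) (no_p4 y x u v yW xW uW vW)
  (no_p4 x u v y xW uW vW yW).
rewrite /triangle /p4_or_2k2 (e_sym y u) (e_sym v u) (e_sym y x) (e_sym x v)
  (e_sym x u) (e_sym y v) euv.
by case: (e v x); case: (e u x); case: (e v y); case: (e u y); case: (e x y).
Qed.

Lemma extended_biclique_of_hitting_sets (S3 S4 : {set T}) :
  hits 3 (fun x => triangle (x 0) (x 1) (x 2)) S3 ->
  hits 4 (fun x => p4_or_2k2 (x 0) (x 1) (x 2) (x 3)) S4 ->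
  extended_biclique e (~: (S3 :|: S4)).
Proof.
move=> hit3 hit4; apply: extended_biclique_of_free.
- move=> a b c; rewrite !inE !negb_or => /andP[a3 _] /andP[b3 _] /andP[c3 _].
  apply/negP => /(hit3 (fun p => if p == 0 then a else if p == 1 then b else c))[p].
  by case: p => [|[|[|p]]] //= _; apply/negP.
- move=> a b c d; rewrite !inE !negb_or => /andP[_ a4] /andP[_ b4] /andP[_ c4] /andP[_ d4].
  apply/negP => /(hit4 (fun p => if p == 0 then a else if p == 1 then b
                                 else if p == 2 then c else d))[p].
  by case: p => [|[|[|[|p]]]] //= _; apply/negP.
Qed.

End Biclique.

Lemma mixed_radix_inj t i j i' j' : j < t -> j' < t ->
  i * t + j = i' * t + j' -> i = i' /\ j = j'.
Proof.
move=> jt j't eq_ij.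
have div_t a b : b < t -> (a * t + b) %/ t = a.
  by move=> bt; rewrite divnMDl ?divn_small ?addn0 //; lia.
have ii' : i = i' by rewrite -(div_t i j jt) -(div_t i' j' j't) eq_ij.
by move: eq_ij; rewrite ii'; split=> //; lia.
Qed.

Lemma mixed_radix_ltn t p q i : p < q -> i < t -> p * t + i < q * t.
Proof.
move=> pq it; have : p.+1 * t <= q * t by rewrite leq_mul2r pq orbT.
by rewrite mulSn; lia.
Qed.

Section Models.
Variables (T : finType) (e : rel T).
Hypothesis e_sym : symmetric e.
Hypothesis e_irr : irreflexive e.

Lemma pair_indep (a b : T) : ~~ e a b ->
  forall x y, x \in [set a; b] -> y \in [set a; b] -> ~~ e x y.
Proof. by move=> nab x y /set2P[]-> /set2P[]->; rewrite ?e_irr // e_sym. Qed.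

Lemma Kt_of_branch_sets t (c : nat -> {set T}) :
  (forall i, i < t -> exists x, x \in c i) ->
  (forall i j x, i < t -> j < t -> x \in c i -> x \in c j -> i = j) ->
  (forall i x y, i < t -> x \in c i -> y \in c i -> ~~ e x y) ->
  (forall i j, i < j -> j < t -> touch e (c i) (c j)) ->
  is_projection e (@K_adj t).
Proof.
move=> c_ne c_disj c_ind c_touch.
apply: (@is_projection_branch_sets T e e_sym e_irr 'I_t _ (fun i => c i)).
- by move=> i; apply: c_ne.
- by move=> i j x xi xj; apply: val_inj; apply: c_disj xi xj.
- by move=> i x y; apply: c_ind.
- move=> i j; rewrite /K_adj -val_eqE /=.
  case: (ltngtP i j) => [ij|ji|_] //=; symmetry; first exact: c_touch.
  by rewrite (touchC e_sym); apply: c_touch.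
Qed.

Lemma Kttt_of_branch_sets t (c : nat -> nat -> {set T}) :
  (forall p i, p < 3 -> i < t -> exists x, x \in c p i) ->
  (forall p i q j x, p < 3 -> i < t -> q < 3 -> j < t ->
     x \in c p i -> x \in c q j -> p = q /\ i = j) ->
  (forall p i x y, p < 3 -> i < t -> x \in c p i -> y \in c p i -> ~~ e x y) ->
  (forall p q i j, p < q -> q < 3 -> i < t -> j < t -> touch e (c p i) (c q j)) ->
  (forall p i j, p < 3 -> i < j -> j < t -> ~~ touch e (c p i) (c p j)) ->
  is_projection e (@Kttt_adj t).
Proof.
move=> c_ne c_disj c_ind c_touch c_sep.
apply: (@is_projection_branch_sets T e e_sym e_irr _ _ (fun s : 'I_3 * 'I_t => c s.1 s.2)).
- by move=> [p i]; apply: c_ne.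
- move=> [p i] [q j] x /= xi xj.
  have [pq ij] := c_disj _ _ _ _ _ (ltn_ord p) (ltn_ord i) (ltn_ord q) (ltn_ord j) xi xj.
  by congr pair; apply: val_inj.
- by move=> [p i] x y; apply: c_ind.
- move=> [p i] [q j]; rewrite /Kttt_adj /= xpair_eqE -!val_eqE /=.
  case: (ltngtP p q) => [pq|qp|/val_inj pq] /=.
  + by symmetry; apply: c_touch.
  + by rewrite (touchC e_sym); symmetry; apply: c_touch.
  + rewrite -pq; case: (ltngtP i j) => [ij|ji|_] //=; symmetry; apply/negbTE.
      exact: c_sep.
    by rewrite (touchC e_sym); apply: c_sep.
Qed.

Section TwoSequences.
Variables (n : nat) (P Q : nat -> T).
Hypothesis P_inj : forall a b, a < n -> b < n -> P a = P b -> a = b.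
Hypothesis Q_inj : forall a b, a < n -> b < n -> Q a = Q b -> a = b.
Hypothesis PQ_neq : forall a b, a < n -> b < n -> P a != Q b.

Lemma Kt_of_clique t : t <= n ->
  (forall a b, a < b -> b < n -> e (P a) (P b)) -> is_projection e (@K_adj t).
Proof.
move=> tn P_clique; apply: (@Kt_of_branch_sets t (fun i => [set P i])).
- by move=> i _; exists (P i); rewrite inE.
- by move=> i j x it jt /set1P-> /set1P/P_inj; apply; lia.
- by move=> i x y _ /set1P-> /set1P->; rewrite e_irr.
- by move=> i j ij jt; rewrite touch1; apply: P_clique => //; lia.
Qed.

Lemma Kt_of_half_graph t : 2 * t <= n ->
  (forall a b, a < b -> b < n -> e (P a) (Q b)) ->
  (forall a b, a < b -> b < n -> e (Q a) (P b) = false) ->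
  is_projection e (@K_adj t).
Proof.
move=> tn PQ QP; apply: (@Kt_of_branch_sets t (fun i => [set P (2 * i).+1; Q (2 * i)])).
- by move=> i _; exists (P (2 * i).+1); rewrite !inE eqxx.
- move=> i j x it jt /set2P[]-> /set2P[].
  + by move/P_inj; lia.
  + by move/eqP; apply: contraTeq => _; apply: PQ_neq; lia.
  + by move/esym/eqP; apply: contraTeq => _; apply: PQ_neq; lia.
  + by move/Q_inj; lia.
- by move=> i x y it; apply: pair_indep; rewrite e_sym QP //; lia.
- by move=> i j ij jt; rewrite (touch2 e_sym) PQ ?orbT //; lia.
Qed.

Lemma Kt_of_nonadjacent_pairs t : t <= n ->
  (forall a, a < n -> e (P a) (Q a) = false) ->
  (forall a b, a < b -> b < n -> e (P a) (Q b)) ->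
  is_projection e (@K_adj t).
Proof.
move=> tn PQ_diag PQ; apply: (@Kt_of_branch_sets t (fun i => [set P i; Q i])).
- by move=> i _; exists (P i); rewrite !inE eqxx.
- move=> i j x it jt /set2P[]-> /set2P[].
  + by apply: P_inj; lia.
  + by move/eqP; apply: contraTeq => _; apply: PQ_neq; lia.
  + by move/esym/eqP; apply: contraTeq => _; apply: PQ_neq; lia.
  + by apply: Q_inj; lia.
- by move=> i x y it; apply: pair_indep; rewrite PQ_diag //; lia.
- by move=> i j ij jt; rewrite (touch2 e_sym) PQ ?orbT //; lia.
Qed.

Hypothesis P_indep : forall a b, a < b -> b < n -> e (P a) (P b) = false.
Hypothesis Q_indep : forall a b, a < b -> b < n -> e (Q a) (Q b) = false.

Lemma P_indep_neq a b : a < n -> b < n -> a != b -> e (P a) (P b) = false.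
Proof.
by move=> an bn; case: ltngtP => // ab _; [|rewrite e_sym]; apply: P_indep.
Qed.

Lemma Q_indep_neq a b : a < n -> b < n -> a != b -> e (Q a) (Q b) = false.
Proof.
by move=> an bn; case: ltngtP => // ab _; [|rewrite e_sym]; apply: Q_indep.
Qed.

(* Index the matching edges by [i * t + j]; the i-th branch set takes the
   P-ends of row i on and above the diagonal and the Q-ends of column i below
   it, so edge [i * t + j] joins branch sets i and j. *)
Lemma Kt_of_induced_matching t : t * t <= n ->
  (forall a b, a < n -> b < n -> a != b -> e (P a) (Q b) = false) ->
  (forall a, a < n -> e (P a) (Q a)) ->
  is_projection e (@K_adj t).
Proof.
move=> tn PQ_off PQ_diag.
have code_n i j : i < t -> j < t -> i * t + j < n.
  by move=> it jt; apply: leq_trans tn; apply: mixed_radix_ltn.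
pose c i := [set P (i * t + val j) | j : 'I_t & i <= j] :|:
            [set Q (val j * t + i) | j : 'I_t & j < i].
have c_mem i x : x \in c i ->
    (exists2 j, (j < t) && (i <= j) & x = P (i * t + j)) \/
    (exists2 j, (j < t) && (j < i) & x = Q (j * t + i)).
  case/setUP=> /imsetP[j]; rewrite inE => ij ->; [left|right];
    by exists (val j); rewrite ?ltn_ord.
apply: (@Kt_of_branch_sets t c).
- move=> i it; exists (P (i * t + i)); apply/setUP; left.
  by apply/imsetP; exists (Ordinal it); rewrite ?inE.
- move=> i i' x it i't /c_mem[][j /andP[jt ij] ->] /c_mem[][j' /andP[j't ij'] /esym].
  + by move/P_inj => /(_ (code_n _ _ i't j't) (code_n _ _ it jt))/mixed_radix_inj[].
  + by move/eqP; rewrite eq_sym (negbTE (PQ_neq (code_n _ _ it jt) (code_n _ _ j't i't))).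
  + by move/eqP; rewrite (negbTE (PQ_neq (code_n _ _ i't j't) (code_n _ _ jt it))).
  + by move/Q_inj => /(_ (code_n _ _ j't i't) (code_n _ _ jt it))/mixed_radix_inj[].
- move=> i x y it /c_mem[][j /andP[jt ij] ->] /c_mem[][j' /andP[j't ij'] ->].
  + case: (j =P j') => [->|/eqP jj']; first by rewrite e_irr.
    rewrite P_indep_neq ?code_n //; apply: contra jj' => /eqP.
    by case/mixed_radix_inj=> // _ ->.
  + rewrite PQ_off ?code_n //; apply/eqP => /mixed_radix_inj[] //; lia.
  + rewrite e_sym PQ_off ?code_n //; apply/eqP => /mixed_radix_inj[] //; lia.
  + case: (j =P j') => [->|/eqP jj']; first by rewrite e_irr.
    rewrite Q_indep_neq ?code_n //; apply: contra jj' => /eqP.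
    by case/mixed_radix_inj=> // ->.
- move=> i j ij jt; have it := ltn_trans ij jt.
  apply/touchP; exists (P (i * t + j)), (Q (i * t + j)); split; last exact/PQ_diag/code_n.
    by apply/setUP; left; apply/imsetP; exists (Ordinal jt); rewrite ?inE ?(ltnW ij).
  by apply/setUP; right; apply/imsetP; exists (Ordinal it); rewrite ?inE.
Qed.

End TwoSequences.

Lemma pair_pattern_case n (P Q : nat -> T) t (x y d : bool) :
  (forall a b, a < n -> b < n -> P a = P b -> a = b) ->
  (forall a b, a < n -> b < n -> Q a = Q b -> a = b) ->
  (forall a b, a < n -> b < n -> P a != Q b) ->
  (forall a b, a < b -> b < n -> e (P a) (P b) = false) ->
  (forall a b, a < b -> b < n -> e (Q a) (Q b) = false) ->
  2 * t <= n -> t * t <= n ->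
  (forall a b, a < b -> b < n -> e (P a) (Q b) = x) ->
  (forall a b, a < b -> b < n -> e (Q a) (P b) = y) ->
  (forall a, a < n -> e (P a) (Q a) = d) ->
  (x = d /\ y = d) \/ is_projection e (@K_adj t).
Proof.
move=> P_inj Q_inj PQ_neq P_indep Q_indep t2n ttn PQ QP PQ_diag.
case: x PQ => PQ; case: y QP => QP.
- case: d PQ_diag => PQ_diag; first by left.
  by right; apply: (Kt_of_nonadjacent_pairs P_inj Q_inj PQ_neq) PQ_diag PQ; lia.
- by right; apply: (Kt_of_half_graph P_inj Q_inj PQ_neq) PQ QP.
- right; apply: (Kt_of_half_graph Q_inj P_inj) QP PQ => // a b an bn.
  by rewrite eq_sym; apply: PQ_neq.
- case: d PQ_diag => PQ_diag; last by left.
  right; apply: (Kt_of_induced_matching P_inj Q_inj PQ_neq P_indep Q_indep) PQ_diag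
    => // a b an bn.
  by case: ltngtP => // ab _; [apply: PQ | rewrite e_sym; apply: QP].
Qed.

Section HomogeneousFamily.
Variables (n k : nat) (v : nat -> nat -> T) (m : nat -> nat -> bool).
Hypothesis v_inj : forall a b p q, a < n -> b < n -> p < k -> q < k ->
  v a p = v b q -> a = b /\ p = q.
Hypothesis v_hom : forall a b p q, a < b -> b < n -> p < k -> q < k ->
  e (v a p) (v b q) = m p q.

Lemma Kt_of_slot_clique t p : t <= n -> p < k -> m p p -> is_projection e (@K_adj t).
Proof.
move=> tn pk mpp; apply: (@Kt_of_clique n (v^~ p)) tn _ => a b an bn.
- by case/v_inj=> //.
- by rewrite v_hom.
Qed.

Lemma slot_pair_pattern t p q d : 2 * t <= n -> t * t <= n ->
  p < k -> q < k -> p != q -> m p p = false -> m q q = false ->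
  (forall a, a < n -> e (v a p) (v a q) = d) ->
  (m p q = d /\ m q p = d) \/ is_projection e (@K_adj t).
Proof.
move=> t2n ttn pk qk pq mpp mqq d_in.
apply: (@pair_pattern_case n (v^~ p) (v^~ q)) d_in => //.
1,2: by move=> a b an bn /v_inj[].
- by move=> a b an bn; apply/eqP => /v_inj[] // _ /eqP; rewrite (negbTE pq).
all: by move=> a b ab bn; rewrite v_hom.
Qed.

Lemma homogeneous_pattern t (known d : nat -> nat -> bool) :
  2 * t <= n -> t * t <= n ->
  (forall p q, p < k -> q < k -> p != q -> known p q ->
     forall a, a < n -> e (v a p) (v a q) = d p q) ->
  is_projection e (@K_adj t) \/
  (forall p, p < k -> m p p = false) /\
  (forall p q, p < k -> q < k -> p != q -> known p q -> m p q = d p q).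
Proof.
move=> t2n ttn d_in.
case: (classic (is_projection e (@K_adj t))) => [|noKt]; [by left | right].
have tn : t <= n by lia.
have m_diag p : p < k -> m p p = false.
  by move=> pk; apply/negP => /(Kt_of_slot_clique tn pk)/noKt.
split=> // p q pk qk pq kn.
have [[]//|/noKt//] := slot_pair_pattern t2n ttn pk qk pq (m_diag p pk) (m_diag q qk)
  (d_in p q pk qk pq kn).
Qed.

Lemma Kttt_of_slot_parts t (sl : nat -> seq nat) : 3 * t <= n ->
  (forall p r, p < 3 -> r \in sl p -> r < k) ->
  (forall p, p < 3 -> sl p != [::]) ->
  (forall p r s a, p < 3 -> r \in sl p -> s \in sl p -> a < n -> ~~ e (v a r) (v a s)) ->
  (forall p r s, p < 3 -> r \in sl p -> s \in sl p -> m r s = false) ->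
  (forall p q, p < q -> q < 3 -> exists r s, [/\ r \in sl p, s \in sl q & m r s]) ->
  is_projection e (@Kttt_adj t).
Proof.
move=> tn sl_k sl_ne sl_ind sl_sep sl_touch.
have code_n p i : p < 3 -> i < t -> p * t + i < n.
  by move=> p3 it; apply: leq_trans tn; apply: mixed_radix_ltn.
(* Part p uses the tuples p * t + i, so those of an earlier part come first. *)
apply: (@Kttt_of_branch_sets t (fun p i => [set x in [seq v (p * t + i) r | r <- sl p]])).
- move=> p i p3 _; case: (sl p) (sl_ne p p3) => [|r s] // _.
  by exists (v (p * t + i) r); rewrite !inE eqxx.
- move=> p i q j x p3 it q3 jt; rewrite !inE => /mapP[r rp ->] /mapP[s sq].
  case/v_inj; rewrite ?code_n ?(sl_k p r) ?(sl_k q s) //.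
  by case/mixed_radix_inj.
- move=> p i x y p3 it; rewrite !inE => /mapP[r rp ->] /mapP[s sp ->].
  by apply: (sl_ind p); rewrite ?code_n.
- move=> p q i j pq q3 it jt; have [r [s [rp sq mrs]]] := sl_touch p q pq q3.
  apply/touchP; exists (v (p * t + i) r), (v (q * t + j) s).
  rewrite !inE !map_f // v_hom ?code_n ?(sl_k p r) ?(sl_k q s) // ?(ltn_trans pq) //.
  exact: leq_trans (mixed_radix_ltn pq it) (leq_addr _ _).
- move=> p i j p3 ij jt; apply/touchP => -[x [y []]].
  rewrite !inE => /mapP[r rp ->] /mapP[s sp ->].
  by rewrite v_hom ?ltn_add2l ?code_n ?(sl_k p) ?(sl_sep p).
Qed.

Lemma Kt_or_Kttt_of_triangles t : k = 3 -> 0 < t -> 3 * (t * t) <= n ->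
  (forall a, a < n -> triangle e (v a 0) (v a 1) (v a 2)) ->
  is_projection e (@K_adj t) \/ is_projection e (@Kttt_adj t).
Proof.
move=> k3 t0 tn tri; have t_tt : t <= t * t by rewrite leq_pmull.
have in_tuple p q : p < k -> q < k -> p != q -> true ->
    forall a, a < n -> e (v a p) (v a q) = true.
  move=> + + pq _ a /tri /and3P[e01 e12 e02]; rewrite k3.
  by case: p q pq => [|[|[|]]] [|[|[|]]] //= *; rewrite // e_sym.
have [t2n ttn] : 2 * t <= n /\ t * t <= n by lia.
have [|[m_diag m_off]] := homogeneous_pattern t2n ttn in_tuple; [by left | right].
apply: (@Kttt_of_slot_parts t (fun p => [:: p])); first lia.
- by move=> p r p3 /[!inE] /eqP->; rewrite k3.
- by [].
- by move=> p r s a _ /[!inE] /eqP-> /eqP->; rewrite e_irr.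
- by move=> p r s p3 /[!inE] /eqP-> /eqP->; rewrite m_diag ?k3.
- move=> p q pq q3; exists p, q; rewrite !inE !eqxx m_off ?k3 //.
  + exact: ltn_trans pq q3.
  + by rewrite neq_ltn pq.
Qed.

Lemma Kt_or_Kttt_of_p4s t : k = 4 -> 0 < t -> 3 * (t * t) <= n ->
  (forall a, a < n -> p4_or_2k2 e (v a 0) (v a 1) (v a 2) (v a 3)) ->
  is_projection e (@K_adj t) \/ is_projection e (@Kttt_adj t).
Proof.
move=> k4 t0 tn p4; have t_tt : t <= t * t by rewrite leq_pmull.
(* Whether b and c are adjacent distinguishes P4 from 2K2. *)
pose known p q := (p, q) \notin [:: (1, 2); (2, 1)].
pose d p q := (p + q == 1) || (p + q == 5).
have in_tuple p q : p < k -> q < k -> p != q -> known p q ->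
    forall a, a < n -> e (v a p) (v a q) = d p q.
  move=> pk qk pq kn a /p4 /and5P[e01 e23 /negbTE n02 /negbTE n13 /negbTE n03].
  move: pk qk kn; rewrite k4 /known /d.
  by case: p q pq => [|[|[|[|]]]] [|[|[|[|]]]] //= *;
    rewrite ?e01 ?e23 ?n02 ?n13 ?n03 // e_sym ?e01 ?e23 ?n02 ?n13 ?n03.
have [t2n ttn] : 2 * t <= n /\ t * t <= n by lia.
have [|[m_diag m_off]] := homogeneous_pattern t2n ttn in_tuple; [by left | right].
(* The parts {a, c}, {b, d}, {a, d} are independent inside a tuple and joined
   across tuples by ab, cd and ba respectively. *)
pose sl p := nth [::] [:: [:: 0; 2]; [:: 1; 3]; [:: 0; 3]] p.
apply: (@Kttt_of_slot_parts t sl); first lia.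
- by rewrite k4; case=> [|[|[|]]] // r _ /[!inE] /orP[]/eqP->.
- by case=> [|[|[|]]].
- move=> p r s a; case: p => [|[|[|]]] //= _ /[!inE] /orP[]/eqP-> /orP[]/eqP-> an;
    by rewrite ?e_irr ?in_tuple ?k4.
- move=> p r s; case: p => [|[|[|]]] //= _ /[!inE] /orP[]/eqP-> /orP[]/eqP->;
    by rewrite ?m_diag ?m_off ?k4.
- move=> [|[|[|p]]] [|[|[|q]]] //= _ _;
    [exists 0, 1 | exists 2, 3 | exists 1, 0]; by rewrite !inE m_off ?k4.
Qed.

End HomogeneousFamily.

Lemma edge_neq a b : e a b -> a != b.
Proof. by apply: contraTneq => ->; rewrite e_irr. Qed.

Lemma triangle_uniq (x : nat -> T) : triangle e (x 0) (x 1) (x 2) ->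
  forall p q, p < 3 -> q < 3 -> p != q -> x p != x q.
Proof.
case/and3P=> e01 e12 e02 p q.
by case: p q => [|[|[|]]] [|[|[|]]] //= *; apply: edge_neq; rewrite // e_sym.
Qed.

Lemma p4_or_2k2_uniq (x : nat -> T) : p4_or_2k2 e (x 0) (x 1) (x 2) (x 3) ->
  forall p q, p < 4 -> q < 4 -> p != q -> x p != x q.
Proof.
case/and5P=> e01 e23 n02 n13 n03.
suff lt_neq p q : p < q -> q < 4 -> x p != x q.
  move=> p q p4 q4; case: ltngtP => // [pq|qp] _; first exact: lt_neq.
  by rewrite eq_sym; apply: lt_neq.
case: q => [|[|[|[|q]]]] //; case: p => [|[|[|p]]] //= _ _; apply/eqP => eq_x.
- by move: e01; rewrite eq_x e_irr.
- by move: n03; rewrite eq_x e23.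
- by move: n13; rewrite eq_x e23.
- by move: n02; rewrite eq_x e_sym e23.
- by move: n03; rewrite -eq_x e01.
- by move: e23; rewrite eq_x e_irr.
Qed.

Definition packing_bound k t := ramsey_bound (adj_pattern k) (3 * (t * t)).

Lemma Kt_or_Kttt_of_triangle_packing t fam : 0 < t ->
  packing 3 (fun x => triangle e (x 0) (x 1) (x 2)) fam (packing_bound 3 t) ->
  is_projection e (@K_adj t) \/ is_projection e (@Kttt_adj t).
Proof.
move=> t0 pack; have [v [vP v_inj v_hom]] := homogeneous_subfamily e pack triangle_uniq.
exact: (@Kt_or_Kttt_of_triangles _ _ _ (fun p q => e (v 0 p) (v 1 q)) v_inj v_hom)
  (erefl _) t0 (leqnn _) vP.
Qed.

Lemma Kt_or_Kttt_of_p4_packing t fam : 0 < t ->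
  packing 4 (fun x => p4_or_2k2 e (x 0) (x 1) (x 2) (x 3)) fam (packing_bound 4 t) ->
  is_projection e (@K_adj t) \/ is_projection e (@Kttt_adj t).
Proof.
move=> t0 pack; have [v [vP v_inj v_hom]] := homogeneous_subfamily e pack p4_or_2k2_uniq.
exact: (@Kt_or_Kttt_of_p4s _ _ _ (fun p q => e (v 0 p) (v 1 q)) v_inj v_hom)
  (erefl _) t0 (leqnn _) vP.
Qed.

End Models.

Theorem theorem1p15 :
  exists f : nat -> nat,
    forall (T : finType) (e : rel T), simple_graph e ->
    forall t : nat, 0 < t ->
      is_projection e (@K_adj t) \/
      is_projection e (@Kttt_adj t) \/
      exists S : {set T}, #|S| <= f t /\ extended_biclique e (~: S).
Proof.
exists (fun t => 3 * packing_bound 3 t + 4 * packing_bound 4 t).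
move=> T e [e_sym e_irr] t t0.
have [[fam pack3]|[S3 cS3 hit3]] :=
  packing_or_hitting_set 3 (fun x => triangle e (x 0) (x 1) (x 2)) (packing_bound 3 t).
  by case: (Kt_or_Kttt_of_triangle_packing e_sym e_irr t0 pack3); auto.
have [[fam pack4]|[S4 cS4 hit4]] :=
  packing_or_hitting_set 4 (fun x => p4_or_2k2 e (x 0) (x 1) (x 2) (x 3)) (packing_bound 4 t).
  by case: (Kt_or_Kttt_of_p4_packing e_sym e_irr t0 pack4); auto.
right; right; exists (S3 :|: S4); split.
  by apply: leq_trans (leq_card_setU _ _) _; apply: leq_add.
exact: extended_biclique_of_hitting_sets hit3 hit4.
Qed.
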